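(* Let $m\ge4$ be an integer and $d=\lfloor m/2\rfloor$. For $0\le i\le d$ let $m_i=\binom{2m}{2i}-\binom{2m}{2i-1}$ (with $\binom{2m}{-1}=0$) be the eigenvalue multiplicities of the folded Johnson graph $\overline{J}(2m,m)$. Then $m_i^2\ge m_{i-1}m_{i+1}$ for all $1\le i\le d-1$.
   Context: The folded Johnson graph $\overline{J}(2m,m)$ is the quotient of the Johnson graph $J(2m,m)$ (vertices the $m$-subsets of a $2m$-set, adjacent when they meet in $m-1$ elements) obtained by identifying each $m$-subset with its complement; it is distance-regular of diameter $\lfloor m/2\rfloor$, and in the standard ordering its eigenvalue multiplicities are $m_i=\binom{2m}{2i}-\binom{2m}{2i-1}$. *)

From mathcomp Require Import all_boot all_algebra.
Set Implicit Arguments. Unset Strict Implicit. Unset Printing Implicit Defensive.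
Import GRing.Theory Num.Theory.
Local Open Scope ring_scope.

(* binomial with 'C(n, -1) = 0 : the subtracted term vanishes for i = 0 *)
Definition binom_pred (n i : nat) : nat :=
  if i is i'.+1 then 'C(n, i'.*2.+1) else 0%N.

(* m_i = C(2m, 2i) - C(2m, 2i-1), as an integer (no truncation) *)
Definition fjmult (m i : nat) : int :=
  ('C(m.*2, i.*2))%:Z - (binom_pred m.*2 i)%:Z.

(* Write [N = 2m+1] and [y_j = N - 4j].  The ballot-type identity
   [N (C(2m,k) - C(2m,k-1)) = C(N,k) (N - 2k)] gives [N m_j = C(N,2j) y_j].
   Since [y_(i-1) y_(i+1) = y_i^2 - 16 <= y_i^2] and the binomial coefficients
   are log-concave (hence also with step 2), [N^2 m_(i-1) m_(i+1) <= N^2 m_i^2]. *)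
From mathcomp Require Import all_boot all_order all_algebra zify.
Import Order.TTheory GRing.Theory Num.Theory.
Local Open Scope ring_scope.

Lemma mulz_bin_diff (n k : nat) :
  (n.+1)%:Z * ('C(n, k.+1)%:Z - 'C(n, k)%:Z) =
  'C(n.+1, k.+1)%:Z * ((n.+1)%:Z - (k.+1).*2%:Z).
Proof.
have diag := mul_bin_diag n.+1 k.
have down := mul_bin_down n.+1 k.+1.
rewrite /= in diag down.
case: (leqP k.+1 n.+1) => hk; first nia.
by rewrite !bin_small //; lia.
Qed.

Lemma fjmult_scaled (m j : nat) :
  (m.*2.+1)%:Z * fjmult m j =
  'C(m.*2.+1, j.*2)%:Z * ((m.*2.+1)%:Z - (j.*2.*2)%:Z).
Proof.
rewrite /fjmult; case: j => [|j] /=; first by rewrite !bin0; lia.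
by rewrite doubleS mulz_bin_diff -!doubleS.
Qed.

Lemma bin_log_concave (n k : nat) : ('C(n, k) * 'C(n, k.+2) <= 'C(n, k.+1) ^ 2)%N.
Proof.
have left0 := mul_bin_left n k; have left1 := mul_bin_left n k.+1.
case: (leqP k.+1 n) => hk; first nia.
by rewrite (@bin_small n k.+2) ?muln0 // ltnW.
Qed.

Lemma bin_log_concave2 (n k : nat) :
  ('C(n, k) * 'C(n, k.+4) <= 'C(n, k.+2) ^ 2)%N.
Proof.
case: (leqP k.+2 n) => hk; last by rewrite (@bin_small n k.+4) ?muln0 //; lia.
have c0 := bin_log_concave n k; have c1 := bin_log_concave n k.+1.
have c2 := bin_log_concave n k.+2.
have mid_gt0 : (0 < 'C(n, k.+2) ^ 2)%N by rewrite expn_gt0 bin_gt0 hk.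
move: c0 c1 c2 mid_gt0; set a0 := 'C(n, k); set a1 := 'C(n, k.+1).
set a2 := 'C(n, k.+2); set a3 := 'C(n, k.+3); set a4 := 'C(n, k.+4).
move=> c0 c1 c2 mid_gt0.
have prod_le : (a0 * a2 * (a2 * a4) <= (a1 * a3) ^ 2)%N.
  by rewrite expnMn leq_mul.
have sq_le : ((a1 * a3) ^ 2 <= (a2 ^ 2) ^ 2)%N by rewrite leq_exp2r.
rewrite -(leq_pmul2l mid_gt0); have := leq_trans prod_le sq_le; lia.
Qed.

Theorem corollary6 (m i : nat) :
  (4 <= m)%N -> (1 <= i)%N -> (i <= (m./2).-1)%N ->
  fjmult m (i.-1) * fjmult m i.+1 <= fjmult m i ^+ 2.
Proof.
case: i => [//|i] _ _ _ /=.
have lo := fjmult_scaled m i; have mid := fjmult_scaled m i.+1.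
have hi := fjmult_scaled m i.+2.
have concave := bin_log_concave2 m.*2.+1 i.*2.
rewrite !doubleS in mid hi concave.
move: lo mid hi concave.
set N := (m.*2.+1)%:Z.
set a0 := 'C(_, i.*2); set a1 := 'C(_, i.*2.+2); set a2 := 'C(_, i.*2.+4).
set f0 := fjmult _ _; set f1 := fjmult _ _; set f2 := fjmult _ _.
set y := N - (i.*2.*2.+4)%:Z.
have -> : N - (i.*2.*2)%:Z = y + 4 by rewrite /y; lia.
have -> : N - (i.*2.*2.+4.+4)%:Z = y - 4 by rewrite /y; lia.
move=> lo mid hi concave; clearbody a0 a1 a2 f0 f1 f2 y.
have concaveZ : a0%:Z * a2%:Z <= a1%:Z ^+ 2 by lia.
have N2_gt0 : 0 < N ^+ 2 by rewrite exprn_gt0 // /N; lia.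
rewrite -(ler_pM2l N2_gt0) -[N ^+ 2 * f1 ^+ 2]exprMn mid.
have -> : N ^+ 2 * (f0 * f2) = a0%:Z * a2%:Z * (y ^+ 2 - 16).
  by rewrite expr2 mulrACA lo hi; lia.
rewrite exprMn; apply: (le_trans (y := a0%:Z * a2%:Z * y ^+ 2)).
- by rewrite ler_wpM2l ?mulr_ge0 // gerDl oppr_le0.
- by rewrite ler_wpM2r ?sqr_ge0.
Qed.
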